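(* Let $P$ be a quasi-lattice ordered subsemigroup of a group $Q$ and $\Lambda$ an $(r,d)$-proper topological $P$-graph. Let $\Omega$ be its path space and $T$ the shift: $\Omega*P=\{(A,n)\in\Omega\times P: A\cdot n\neq\emptyset\}$, $T(A,n)=A\cdot n$. Then $T$ is a directed action of $P$ on $\Omega$ by partial local homeomorphisms.
   Context: $P\subset Q$ subsemigroup, $m\le n$ iff $n=mp$ with $p\in P$; quasi-lattice ordered: $P\cap P^{-1}=\{e\}$ and two elements with a common upper bound have a least upper bound. Topological $P$-graph: small category $\Lambda$ with vertex set $\Lambda^{(0)}\subset\Lambda$, $r,s:\Lambda\to\Lambda^{(0)}$, composition on $\Lambda^{(2)}=\{(\lambda,\mu):s(\lambda)=r(\mu)\}$; $\Lambda,\Lambda^{(0)}$ locally compact Hausdorff, $r,s$ continuous, $s$ a local homeomorphism, inclusion of vertices continuous, composition continuous and open; continuous degree map $d:\Lambda\to P$ ($P$ discrete) with $d(\lambda\mu)=d(\lambda)d(\mu)$, $d(v)=e$ on vertices, and composition $\Lambda^m*\Lambda^n\to\Lambda^{mn}$ a homeomorphism ($\Lambda^m=d^{-1}(m)$). $(r,d)$-proper: $(r,d):\Lambda\to\Lambda^{(0)}\times P$ is proper. $\mu\le\lambda$ iff $\lambda=\mu\nu$. A subset is hereditary if closed under $\le$-predecessors and directed if any two elements have a common upper bound inside it. The path space $\Omega$ is the set of nonempty closed hereditary directed subsets of $\Lambda$ with the relative Fell topology (basic open sets $\{F:F\cap K=\emptyset, F\cap U_i\ne\emptyset\}$, $K$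 compact, $U_i$ open). $A\cdot n=\{\nu:\exists\mu\in\Lambda^n, \mu\nu\in A\}$. For a partial action, $U(n)=\{A:(A,n)\in\Omega*P\}$, $V(n)=\{A\cdot n\}$, $T_n(A)=A\cdot n$; ''by partial local homeomorphisms'' means each $U(n),V(n)$ is open and $T_n:U(n)\to V(n)$ is a local homeomorphism; directed means whenever $U(m)\cap U(n)\neq\emptyset$ there is $r\ge m,n$ in $P$ with $U(m)\cap U(n)=U(r)$. A partial action satisfies $A\cdot e=A$ and $(A,mn)\in\Omega*P$ iff $(A,m),(A\cdot m,n)\in\Omega*P$ with $(A\cdot m)\cdot n=A\cdot(mn)$. *)

From HB Require Import structures.
From mathcomp Require Import all_boot all_order all_algebra.
From mathcomp Require Import all_classical all_reals all_analysis.

Set Implicit Arguments.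
Unset Strict Implicit.
Unset Printing Implicit Defensive.

Local Open Scope classical_set_scope.
Local Open Scope group_scope.

(* Generic topological notions, phrased for an arbitrary "open sets"   *)
(* predicate, so that they apply both to mathcomp topological types    *)
(* (with [open]) and to the path space with its relative Fell topology *)

Definition rel_open {X : Type} (opX : set (set X)) (A W : set X) : Prop :=
  exists O, opX O /\ W = A `&` O.

Definition rel_cont {X Y : Type} (opX : set (set X)) (opY : set (set Y))
    (A : set X) (f : X -> Y) : Prop :=
  forall O, opY O -> rel_open opX A (A `&` f @^-1` O).

Definition homeo_on {X Y : Type} (opX : set (set X)) (opY : set (set Y))
    (A : set X) (B : set Y) (f : X -> Y) : Prop :=
  (forall x, A x -> B (f x)) /\
  exists g : Y -> X,
    (forall y, B y -> A (g y) /\ f (g y) = y) /\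
    (forall x, A x -> g (f x) = x) /\
    rel_cont opX opY A f /\ rel_cont opY opX B g.

Definition local_homeo {X Y : Type} (opX : set (set X)) (opY : set (set Y))
    (A : set X) (B : set Y) (f : X -> Y) : Prop :=
  (forall x, A x -> B (f x)) /\
  forall x, A x -> exists W : set X,
    W x /\ W `<=` A /\ rel_open opX A W /\ rel_open opY B (f @` W) /\
    homeo_on opX opY W (f @` W) f.

Definition ple {Q : groupType} (P : set Q) (m n : Q) : Prop :=
  exists p, P p /\ n = m * p.

Definition quasi_lattice_ordered {Q : groupType} (P : set Q) : Prop :=
  (forall m n, P m -> P n -> P (m * n)) /\
  [set x | P x /\ P x^-1] = [set 1] /\
  (forall m n, P m -> P n ->
     (exists k, P k /\ ple P m k /\ ple P n k) ->
     exists l, P l /\ ple P m l /\ ple P n l /\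
       forall k, P k -> ple P m k -> ple P n k -> ple P l k).

(* The vertex set Lambda^(0) is the space V, included in Lambda by the  *)
(* injection iota (vertices are the identity morphisms); comp l m is    *)
(* the composite l m, meaningful when s l = r m.                        *)

Section PGraph.
Context {Q : groupType} (P : set Q) {L V : topologicalType}
  (iota : V -> L) (r s : L -> V) (comp : L -> L -> L) (d : L -> Q).

Definition composable : set (L * L) := [set p | s p.1 = r p.2].

Definition uncomp (p : L * L) : L := comp p.1 p.2.

Definition composable_deg (m n : Q) : set (L * L) :=
  [set p | s p.1 = r p.2 /\ d p.1 = m /\ d p.2 = n].

Definition deg_set (n : Q) : set L := d @^-1` [set n].

Definition is_topological_P_graph : Prop :=
  (forall v, r (iota v) = v) /\ (forall v, s (iota v) = v) /\
  (forall l m, s l = r m -> r (comp l m) = r l /\ s (comp l m) = s m) /\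
  (forall l m n, s l = r m -> s m = r n ->
     comp (comp l m) n = comp l (comp m n)) /\
  (forall l, comp (iota (r l)) l = l) /\
  (forall l, comp l (iota (s l)) = l) /\
  hausdorff_space L /\ locally_compact [set: L] /\
  hausdorff_space V /\ locally_compact [set: V] /\
  continuous r /\ continuous s /\
  local_homeo open open [set: L] [set: V] s /\
  continuous iota /\
  rel_cont open open composable uncomp /\
  (forall W, rel_open open composable W -> open (uncomp @` W)) /\
  (forall l, P (d l)) /\
  continuous (d : L -> discrete_topology Q) /\
  (forall l m, s l = r m -> d (comp l m) = d l * d m) /\
  (forall v, d (iota v) = 1) /\
  (forall m n, P m -> P n ->
     homeo_on open open (composable_deg m n) (deg_set (m * n)) uncomp).

Definition rd_proper : Prop :=
  forall K : set (V * discrete_topology Q),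
    K `<=` [set x | P x.2] -> compact K ->
    compact ((fun l => (r l, d l : discrete_topology Q)) @^-1` K).

Definition path_le (mu la : L) : Prop :=
  exists nu, s mu = r nu /\ la = comp mu nu.

Definition hereditary (A : set L) : Prop :=
  forall la mu, A la -> path_le mu la -> A mu.

Definition directed_set (A : set L) : Prop :=
  forall la mu, A la -> A mu -> exists nu, A nu /\ path_le la nu /\ path_le mu nu.

Definition path_space : set (set L) :=
  [set A | A !=set0 /\ closed A /\ hereditary A /\ directed_set A].

Definition fell_basic (K : set L) (k : nat) (U : 'I_k -> set L) : set (set L) :=
  [set F | F `&` K = set0 /\ forall i, F `&` U i !=set0].

Definition omega_open (W : set (set L)) : Prop :=
  W `<=` path_space /\
  forall A, W A -> exists (K : set L) (k : nat) (U : 'I_k -> set L),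
    compact K /\ (forall i, open (U i)) /\ fell_basic K U A /\
    fell_basic K U `&` path_space `<=` W.

Definition shift (A : set L) (n : Q) : set L :=
  [set nu | exists mu, d mu = n /\ s mu = r nu /\ A (comp mu nu)].

Definition omega_star_P : set (set L * Q) :=
  [set x | path_space x.1 /\ P x.2 /\ shift x.1 x.2 !=set0].

Definition dom_U (n : Q) : set (set L) := [set A | omega_star_P (A, n)].
Definition ran_V (n : Q) : set (set L) := (fun A => shift A n) @` dom_U n.

Definition is_partial_action : Prop :=
  (forall x, omega_star_P x -> path_space (shift x.1 x.2)) /\
  (forall A, path_space A -> omega_star_P (A, 1) /\ shift A 1 = A) /\
  (forall A m n, path_space A -> P m -> P n ->
     (omega_star_P (A, m * n) <->
       (omega_star_P (A, m) /\ omega_star_P (shift A m, n)))) /\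
  (forall A m n, path_space A -> P m -> P n -> omega_star_P (A, m * n) ->
     shift (shift A m) n = shift A (m * n)).

Definition by_partial_local_homeos : Prop :=
  forall n, P n ->
    omega_open (dom_U n) /\ omega_open (ran_V n) /\
    local_homeo omega_open omega_open (dom_U n) (ran_V n) (fun A => shift A n).

Definition directed_action : Prop :=
  forall m n, P m -> P n -> dom_U m `&` dom_U n !=set0 ->
    exists k, P k /\ ple P m k /\ ple P n k /\ dom_U m `&` dom_U n = dom_U k.

End PGraph.

From Pilot Require Import Defs.
From HB Require Import structures.
From mathcomp Require Import all_boot all_order all_algebra.
From mathcomp Require Import all_classical all_reals all_analysis.
From mathcomp Require Import finmap.

Set Implicit Arguments.
Unset Strict Implicit.
Unset Printing Implicit Defensive.
Local Open Scope classical_set_scope.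
Local Open Scope group_scope.

(* A path [A] contains at most one element of each degree: two such elements have a
   common extension in [A], and unique factorisation makes them equal. Hence [A . n] is
   nonempty exactly when [A] has an element [mu] of degree [n], and then
   [A . n = {nu | mu nu in A}]; the partial action axioms follow from factorisation, and
   directedness from least upper bounds in [P]. [U(n)] and [V(n)] are the paths meeting the
   open sets [Lambda^n] and [r^-1 (s Lambda^n)]. Near a path containing [mu] of degree [n],
   take an open set [W] of degree-[n] paths around [mu] on which [s] is injective; the
   inverse of [T_n] sends [F] to the hereditary closure of [mu' F], where [mu'] is the
   element of [W] with [s mu' = r F]. Continuity of [T_n] and of this inverse is checked on
   the subbasic Fell conditions "meets an open set" and "misses a compact set"; the latter
   uses local compactness for [T_n], and (r,d)-properness together with least upper bounds
   for its inverse. *)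

Definition pointed_at {T : topologicalType} (x : T) : Type := T.
HB.instance Definition _ (T : topologicalType) (x : T) :=
  Topological.copy (pointed_at x) T.
HB.instance Definition _ (T : topologicalType) (x : T) :=
  isPointed.Build (pointed_at x) x.

(* [compact_cover] needs a pointed space; any point of [K] will do. *)
Lemma compact_cover_compact (T : topologicalType) (K : set T) :
  compact K -> cover_compact K.
Proof.
move=> cK I D f fo cov; have [[x Kx]|K0] := pselect (K !=set0).
  by have : @compact (pointed_at x) K by []; rewrite compact_cover; apply.
by exists fset0%fset => // y Ky; exfalso; apply: K0; exists y.
Qed.

Section LocalTopology.
Context {X : topologicalType}.

Lemma open_of_open_nbhs (A : set X) :
  (forall x, A x -> exists W, open W /\ W x /\ W `<=` A) -> open A.
Proof.
move=> h; rewrite openE => x /h [W [oW [Wx sWA]]]; rewrite /interior.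
by apply: filterS sWA _; apply: open_nbhs_nbhs.
Qed.

Lemma compact_nbhs_sub (x : X) (W : set X) :
  hausdorff_space X -> locally_compact [set: X] -> open W -> W x ->
  exists C, compact C /\ C `<=` W /\ nbhs x C.
Proof.
move=> hX lcX oW Wx.
have [B nB [cB _]] := lcX x I; rewrite withinET in nB.
have [E nE sE] := compact_regular hX cB nB (open_nbhs_nbhs (conj oW Wx)).
have clB : closed B by exact: compact_closed hX cB.
exists (closure (E `&` B)); split.
  apply: (subclosed_compact (@closed_closure _ _) cB).
  by move=> y /(closureS (@subIsetr _ E B)); apply: clB.
split; first by move=> y /(closureS (@subIsetl _ E B)); apply: sE.
by apply: filterS (@subset_closure _ _) _; apply: filterI.
Qed.

End LocalTopology.

Section Topology.
Context {X Y : topologicalType}.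

Lemma open_setX (A : set X) (B : set Y) : open A -> open B -> open (A `*` B).
Proof.
move=> oA oB; rewrite openE => -[x y] [Ax By]; rewrite /interior.
by exists (A, B) => //; split; apply: open_nbhs_nbhs; split.
Qed.

Lemma closed_setXT (A : set X) : closed A -> closed (A `*` [set: Y]).
Proof.
move=> cA; rewrite -openC; suff -> : ~` (A `*` [set: Y]) = ~` A `*` [set: Y].
  by apply: open_setX; [exact: closed_openC | exact: openT].
apply/seteqP; split => -[x y] /=; last by move=> [nA _] [].
by move=> nA; split => // Ax; exact: nA.
Qed.

Lemma rel_cont_of_continuous (A : set X) (f : X -> Y) :
  continuous f -> rel_cont open open A f.
Proof.
by move=> cf O oO; exists (f @^-1` O); split => //; apply: (continuousP _).1.
Qed.

Lemma rel_cont_within (A B : set X) (f : X -> Y) :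
  rel_cont open open A f -> B `<=` A -> {within B, continuous f}.
Proof.
move=> fc BA; apply/continuousP => O oO; apply/open_subspaceP.
have [W [oW AfW]] := fc O oO; exists W => //.
apply/seteqP; split => x [fx Bx]; split => //; have Ax := BA x Bx.
  by have : (A `&` W) x by []; rewrite -AfW => -[].
by have : (A `&` f @^-1` O) x by []; rewrite AfW => -[].
Qed.

Lemma rel_cont_compact (A K : set X) (f : X -> Y) :
  rel_cont open open A f -> K `<=` A -> compact K -> compact (f @` K).
Proof. by move=> fc KA; apply: continuous_compact; apply: rel_cont_within fc KA. Qed.

Lemma rel_cont_closed (A : set X) (Z : set Y) (f : X -> Y) :
  rel_cont open open A f -> closed A -> closed Z -> closed (A `&` f @^-1` Z).
Proof.
move=> fc cA cZ; have [W [oW AfW]] := fc _ (closed_openC cZ).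
suff -> : A `&` f @^-1` Z = A `&` ~` W.
  by apply: closedI => //; apply: open_closedC.
apply/seteqP; split => x [Ax fx]; split => //.
  by move=> Wx; have : (A `&` W) x by []; rewrite -AfW => -[].
apply: contrapT => nZ; apply: fx.
by have : (A `&` f @^-1` ~` Z) x by []; rewrite AfW => -[].
Qed.

Lemma closed_eq_comp {Z : topologicalType} (f : X -> Z) (g : Y -> Z) :
  hausdorff_space Z -> continuous f -> continuous g ->
  closed [set p : X * Y | f p.1 = g p.2].
Proof.
move=> hZ cf cg; rewrite -openC; apply: open_of_open_nbhs => -[x y] /= /eqP fxy.
have := hZ; rewrite open_hausdorff => /(_ _ _ fxy) [[W1 W2]] /=.
rewrite !in_setE => -[W1x W2y] [oW1 oW2 W12].
exists ((f @^-1` W1) `*` (g @^-1` W2)); split.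
  by apply: open_setX; apply: (continuousP _).1.
split => // -[a b] /= [fa gb] fgab.
have : (W1 `&` W2) (f a) by split => //; rewrite fgab.
by rewrite W12.
Qed.

Lemma local_homeo_open (f : X -> Y) (A : set X) :
  local_homeo open open [set: X] [set: Y] f -> open A -> open (f @` A).
Proof.
move=> [_ lh] oA; apply: open_of_open_nbhs => _ [x Ax <-].
have [W [Wx [_ [_ [[fW [ofW fWE]] [_ [g [gB [gK [_ gc]]]]]]]]]] := lh x I.
have [Z [oZ EZ]] := gc A oA.
exists ((f @` W) `&` Z); split; first by rewrite fWE setTI; apply: openI.
split.
  have : (f @` W `&` g @^-1` A) (f x) by split; [exists x|rewrite /preimage /= gK].
  by rewrite EZ.
move=> y; rewrite -EZ => -[yW gy]; exists (g y) => //.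
by have [_ ->] := gB y yW.
Qed.

Lemma local_homeo_locally_inj (f : X -> Y) (x : X) :
  local_homeo open open [set: X] [set: Y] f ->
  exists W, open W /\ W x /\ {in W &, injective f}.
Proof.
move=> [_ lh]; have [W [Wx [_ [[Wo [oWo WE]] [_ [_ [g [_ [gK _]]]]]]]]] := lh x I.
exists W; split; first by rewrite WE setTI.
split => // a b; rewrite !in_setE => Wa Wb fab.
by rewrite -(gK a Wa) fab gK.
Qed.

End Topology.

Lemma rel_cont_subset {X Y : Type} (opX : set (set X)) (opY : set (set Y))
    (A B : set X) (f : X -> Y) :
  rel_cont opX opY A f -> B `<=` A -> rel_cont opX opY B f.
Proof.
move=> fc BA O oO; have [W [oW AfW]] := fc O oO; exists W; split => //.
apply/seteqP; split => x [Bx h]; split => //; have Ax := BA x Bx.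
  by have : (A `&` f @^-1` O) x by []; rewrite AfW => -[].
by have : (A `&` W) x by []; rewrite -AfW => -[].
Qed.

Lemma rel_open_sub {X : Type} (opX : set (set X)) (A W : set X) :
  opX W -> W `<=` A -> rel_open opX A W.
Proof. by move=> oW WA; exists W; split => //; rewrite setIidr. Qed.

(** * Quasi-lattice orders *)

Section QuasiLattice.
Context {Q : groupType} (P : set Q).
Hypothesis HQ : quasi_lattice_ordered P.

Definition is_lub (m n l : Q) : Prop :=
  P l /\ ple P m l /\ ple P n l /\
  forall k, P k -> ple P m k -> ple P n k -> ple P l k.

Lemma P_mul m n : P m -> P n -> P (m * n).
Proof. by case: HQ => h _; apply: h. Qed.

Lemma P_antisym x : P x -> P x^-1 -> x = 1.
Proof.
by case: HQ => _ [E _] h1 h2; have : [set x | P x /\ P x^-1] x by []; rewrite E.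
Qed.

Lemma P1 : P 1.
Proof.
by case: HQ => _ [E _]; have [] : [set x | P x /\ P x^-1] 1 by rewrite E.
Qed.

Lemma lub_exists m n :
  P m -> P n -> (exists k, P k /\ ple P m k /\ ple P n k) -> exists l, is_lub m n l.
Proof. by case: HQ => _ [_ h] Pm Pn /(h _ _ Pm Pn). Qed.

Lemma lub_uniq m n l l' : is_lub m n l -> is_lub m n l' -> l = l'.
Proof.
move=> [Pl [ml [nl lubl]]] [Pl' [ml' [nl' lubl']]].
have [x [Px E1]] := lubl l' Pl' ml' nl'.
have [y [Py E2]] := lubl' l Pl ml nl.
have xy : x * y = 1 by apply: (@mulgI _ l); rewrite mulg1 mulgA -E1 -E2.
have Pxi : P x^-1 by rewrite (mulg1_eq xy).
by rewrite E1 (P_antisym Px Pxi) mulg1.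
Qed.

End QuasiLattice.

(** * Unique factorisation in a topological P-graph *)

Section PGraph.
Context {Q : groupType} (P : set Q) {L V : topologicalType}
  (iota : V -> L) (r s : L -> V) (comp : L -> L -> L) (d : L -> Q).
Hypothesis HQ : quasi_lattice_ordered P.
Hypothesis HG : is_topological_P_graph P iota r s comp d.

Local Notation Lambda := (deg_set d).
Local Notation path_le := (Defs.path_le r s comp).
Local Notation hereditary := (Defs.hereditary r s comp).
Local Notation directed_set := (Defs.directed_set r s comp).
Local Notation path_space := (Defs.path_space r s comp).
Local Notation shift := (Defs.shift r s comp d).
Local Notation omega_star_P := (Defs.omega_star_P P r s comp d).

Ltac graph_axioms :=
  case: HG => r_iota [s_iota [rs_comp [comp_assoc [comp_iotal [comp_iotar
    [hausdorffL [locally_compactL [hausdorffV [_ [continuous_r [continuous_s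
    [local_homeo_s [_ [rel_cont_comp [open_map_comp [P_deg [continuous_d
    [d_comp [d_iota homeo_comp]]]]]]]]]]]]]]]]]]].

Lemma r_iota v : r (iota v) = v. Proof. by graph_axioms. Qed.
Lemma s_iota v : s (iota v) = v. Proof. by graph_axioms. Qed.
Lemma r_comp l m : s l = r m -> r (comp l m) = r l.
Proof. by graph_axioms => /rs_comp []. Qed.
Lemma s_comp l m : s l = r m -> s (comp l m) = s m.
Proof. by graph_axioms => /rs_comp []. Qed.
Lemma comp_assoc l m n :
  s l = r m -> s m = r n -> comp (comp l m) n = comp l (comp m n).
Proof. by graph_axioms; apply: comp_assoc. Qed.
Lemma comp_iotal l : comp (iota (r l)) l = l. Proof. by graph_axioms. Qed.
Lemma comp_iotar l : comp l (iota (s l)) = l. Proof. by graph_axioms. Qed.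
Lemma hausdorffL : hausdorff_space L. Proof. by graph_axioms. Qed.
Lemma locally_compactL : locally_compact [set: L]. Proof. by graph_axioms. Qed.
Lemma hausdorffV : hausdorff_space V. Proof. by graph_axioms. Qed.
Lemma continuous_r : continuous r. Proof. by graph_axioms. Qed.
Lemma continuous_s : continuous s. Proof. by graph_axioms. Qed.
Lemma local_homeo_s : local_homeo open open [set: L] [set: V] s.
Proof. by graph_axioms. Qed.
Lemma rel_cont_comp : rel_cont open open (composable r s) (uncomp comp).
Proof. by graph_axioms. Qed.
Lemma open_map_comp W : rel_open open (composable r s) W -> open (uncomp comp @` W).
Proof. by graph_axioms; apply: open_map_comp. Qed.
Lemma P_deg l : P (d l). Proof. by graph_axioms. Qed.
Lemma continuous_d : continuous (d : L -> discrete_topology Q). Proof. by graph_axioms. Qed.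
Lemma d_comp l m : s l = r m -> d (comp l m) = d l * d m.
Proof. by graph_axioms; apply: d_comp. Qed.
Lemma d_iota v : d (iota v) = 1. Proof. by graph_axioms. Qed.
Lemma homeo_comp m n : P m -> P n ->
  homeo_on open open (composable_deg r s d m n) (Lambda (m * n)) (uncomp comp).
Proof. by graph_axioms; apply: homeo_comp. Qed.

Lemma factorization_uniq a b a' b' :
  s a = r b -> s a' = r b' -> d a = d a' -> d b = d b' ->
  comp a b = comp a' b' -> a = a' /\ b = b'.
Proof.
move=> hab hab' daa' dbb' e.
have [_ [g [_ [gK _]]]] := homeo_comp (P_deg a) (P_deg b).
have H1 : composable_deg r s d (d a) (d b) (a, b) by [].
have H2 : composable_deg r s d (d a) (d b) (a', b') by rewrite /composable_deg /= daa' dbb'.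
by move: (gK _ H1) (gK _ H2); rewrite /uncomp /= e => -> [].
Qed.

Lemma factorization_exists la m n : P m -> P n -> d la = m * n ->
  exists a b, s a = r b /\ d a = m /\ d b = n /\ la = comp a b.
Proof.
move=> Pm Pn E; have [_ [g [gA _]]] := homeo_comp Pm Pn.
have [[H1 [H2 H3]] H4] := gA la E.
by exists (g la).1, (g la).2.
Qed.

Lemma comp_inj mu x y : s mu = r x -> s mu = r y -> comp mu x = comp mu y -> x = y.
Proof.
move=> hx hy e.
have dxy : d x = d y by apply: (@mulgI _ (d mu)); rewrite -!d_comp // e.
by have [] := factorization_uniq hx hy erefl dxy e.
Qed.

Lemma deg1_vertex mu : d mu = 1 -> mu = iota (r mu).
Proof.
move=> h; have [] // := @factorization_uniq (iota (r mu)) mu mu (iota (s mu)).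
- by rewrite s_iota.
- by rewrite r_iota.
- by rewrite d_iota h.
- by rewrite d_iota h.
- by rewrite comp_iotal comp_iotar.
Qed.

Lemma path_le_refl la : path_le la la.
Proof. by exists (iota (s la)); rewrite r_iota comp_iotar. Qed.

Lemma path_le_vertex la : path_le (iota (r la)) la.
Proof. by exists la; rewrite s_iota comp_iotal. Qed.

Lemma path_le_comp mu x : s mu = r x -> path_le mu (comp mu x).
Proof. by exists x. Qed.

Lemma path_le_trans a b c : path_le a b -> path_le b c -> path_le a c.
Proof.
move=> [x [hx ->]] [y [hy ->]].
have hxy : s x = r y by rewrite -hy s_comp.
by exists (comp x y); rewrite r_comp // comp_assoc.
Qed.

Lemma path_le_deg a b : path_le a b -> ple P (d a) (d b).
Proof.
by move=> [x [hx ->]]; exists (d x); rewrite d_comp //; split => //; exact: P_deg.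
Qed.

Lemma path_le_compl mu x y : s mu = r x -> path_le x y -> path_le (comp mu x) (comp mu y).
Proof. by move=> h [z [hz ->]]; exists z; rewrite s_comp // comp_assoc. Qed.

Lemma path_le_compl_cancel mu x y : s mu = r x -> s mu = r y ->
  path_le (comp mu x) (comp mu y) -> path_le x y.
Proof.
move=> hx hy [z [hz E]]; rewrite s_comp // in hz.
rewrite comp_assoc // in E; have E2 := comp_inj hy _ E.
by exists z; rewrite E2 // r_comp.
Qed.

Lemma prefix_deg_inj a a' b : path_le a b -> path_le a' b -> d a = d a' -> a = a'.
Proof.
move=> [x [hx Ex]] [x' [hx' Ex']] e.
have : d a * d x = d a' * d x' by rewrite -!d_comp // -Ex -Ex'.
rewrite e => /mulgI e2.
by have [] := factorization_uniq hx hx' e e2 (etrans (esym Ex) Ex').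
Qed.

Lemma prefix_exists b m : P m -> ple P m (d b) -> exists a, path_le a b /\ d a = m.
Proof.
move=> Pm [p [Pp E]]; have [a [c [h1 [h2 [h3 E2]]]]] := factorization_exists Pm Pp E.
by exists a; split => //; exists c.
Qed.

Lemma prefix_le a a' b :
  path_le a b -> path_le a' b -> ple P (d a) (d a') -> path_le a a'.
Proof.
move=> ab [x' [hx' Eb]] [p [Pp E]].
have [c [e [hce [dc [de E2]]]]] := factorization_exists (P_deg a) Pp E.
have hex : s e = r x' by rewrite -(s_comp hce) -E2.
have cb : path_le c b by exists (comp e x'); rewrite r_comp // Eb E2 comp_assoc.
by rewrite (prefix_deg_inj ab cb (esym dc)); exists e.
Qed.

Lemma prefix_lub mu b la : s mu = r b -> path_le la (comp mu b) ->
  exists c, path_le c b /\ s mu = r c /\ path_le la (comp mu c) /\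
            is_lub P (d la) (d mu) (d (comp mu c)).
Proof.
move=> hb lab.
have mub : ple P (d mu) (d (comp mu b)) by apply: path_le_deg; apply: path_le_comp.
have [p lubp] := lub_exists HQ (P_deg la) (P_deg mu)
  (ex_intro _ _ (conj (P_deg _) (conj (path_le_deg lab) mub))).
have [lp [ladp [mudp lubp']]] := lubp.
have [ga [gab dga]] := prefix_exists lp (lubp' _ (P_deg _) (path_le_deg lab) mub).
have [c [hc Ega]] : path_le mu ga.
  by apply: prefix_le (path_le_comp hb) gab _; rewrite dga.
have lag : path_le la ga by apply: prefix_le lab gab _; rewrite dga.
exists c; rewrite -Ega dga; split => //.
by apply: path_le_compl_cancel hc hb _; rewrite -Ega.
Qed.

(** * Paths and the shift *)

Lemma directed_deg_inj A x y : directed_set A -> A x -> A y -> d x = d y -> x = y.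
Proof.
move=> dA Ax Ay e; have [nu [_ [xnu ynu]]] := dA _ _ Ax Ay.
exact: prefix_deg_inj xnu ynu e.
Qed.

Lemma path_r_const A x y : hereditary A -> directed_set A -> A x -> A y -> r x = r y.
Proof.
move=> hA dA Ax Ay.
have := directed_deg_inj dA (hA _ _ Ax (path_le_vertex x)) (hA _ _ Ay (path_le_vertex y)).
by rewrite !d_iota => /(_ erefl) E; rewrite -(r_iota (r x)) E r_iota.
Qed.

Lemma shift_neq0 A n : hereditary A -> shift A n !=set0 <-> exists2 mu, A mu & d mu = n.
Proof.
move=> hA; split => [[nu [mu [dmu [hmu Amunu]]]]|[mu Amu dmu]].
  by exists mu => //; apply: hA Amunu _; exists nu.
by exists (iota (s mu)), mu; rewrite r_iota comp_iotar.
Qed.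

Lemma shiftE A mu : hereditary A -> directed_set A -> A mu ->
  shift A (d mu) = [set nu | s mu = r nu /\ A (comp mu nu)].
Proof.
move=> hA dA Amu; apply/seteqP; split => nu; last by move=> [h1 h2]; exists mu.
move=> [mu' [dmu' [hmu' Amu'nu]]].
have Amu' : A mu' by apply: hA Amu'nu _; exists nu.
by rewrite (directed_deg_inj dA Amu Amu').
Qed.

Lemma Lambda_open q : open (Lambda q).
Proof.
exact: (continuousP _).1 continuous_d [set q : discrete_topology Q] (discrete_open _).
Qed.

Lemma Lambda_closed q : closed (Lambda q).
Proof.
rewrite -openC; apply: open_of_open_nbhs => x nx; exists (Lambda (d x)).
by split; [exact: Lambda_open|split => // y; rewrite /deg_set /= => ->].
Qed.

(* Distinct points of equal degree are separated inside the open set [Lambda q]. *)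
Lemma closed_of_deg_inj (A : set L) : {in A &, injective d} -> closed A.
Proof.
move=> dA; rewrite -openC; apply: open_of_open_nbhs => x nAx.
have [[a [Aa da]] | no] := pselect (exists a, A a /\ d a = d x); last first.
  exists (Lambda (d x)); split; first exact: Lambda_open.
  by split => // y /= dy Ay; apply: no; exists y.
have /eqP xa : x <> a by move=> E; apply: nAx; rewrite E.
have := hausdorffL; rewrite open_hausdorff => /(_ x a xa) [[W1 W2]] /=.
rewrite !in_setE => -[xW1 aW2] [oW1 oW2 W12].
exists (W1 `&` Lambda (d x)); split; first by apply: openI => //; exact: Lambda_open.
split => // y [yW1 dy] Ay.
have E : y = a by apply: dA; rewrite ?in_setE // dy da.
have : (W1 `&` W2) a by split => //; rewrite -E.
by rewrite W12.
Qed.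

Lemma directed_closed A : directed_set A -> closed A.
Proof.
move=> dA; apply: closed_of_deg_inj => x y; rewrite !in_setE => Ax Ay.
exact: directed_deg_inj dA Ax Ay.
Qed.

Lemma path_spaceP A :
  path_space A <-> [/\ A !=set0, hereditary A & directed_set A].
Proof.
split => [[A0 [_ [hA dA]]] | [A0 hA dA]]; first by [].
by split => //; split => //; exact: directed_closed.
Qed.

Lemma shift_path_space A n : path_space A -> shift A n !=set0 -> path_space (shift A n).
Proof.
move=> /path_spaceP [_ hA dA] /(shift_neq0 _ hA) [mu Amu <-].
rewrite (shiftE hA dA Amu); apply/path_spaceP; split.
- by exists (iota (s mu)); rewrite /= r_iota comp_iotar.
- move=> la nu [hla Ala] [x [hx E]].
  have hnu : s mu = r nu by rewrite hla E r_comp.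
  split => //; apply: hA Ala _; rewrite E.
  by apply: path_le_compl => //; apply: path_le_comp.
- move=> la la' [hla Ala] [hla' Ala'].
  have [nu [Anu [lanu la'nu]]] := dA _ _ Ala Ala'.
  have [c [hc Ec]] := path_le_trans (path_le_comp hla) lanu.
  rewrite Ec in Anu lanu la'nu.
  exists c; split => //; split; first exact: path_le_compl_cancel hla hc lanu.
  exact: path_le_compl_cancel hla' hc la'nu.
Qed.

Lemma shift1 A : path_space A -> shift A 1 = A.
Proof.
move=> _; apply/seteqP; split => x; last first.
  by move=> Ax; exists (iota (r x)); rewrite d_iota s_iota comp_iotal.
move=> [mu [/deg1_vertex E [hmu Amux]]]; rewrite E s_iota in hmu.
by rewrite E hmu comp_iotal in Amux.
Qed.

Lemma shiftM A m n : P m -> P n -> shift (shift A m) n = shift A (m * n).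
Proof.
move=> Pm Pn; apply/seteqP; split => x.
  move=> [a [da [hax [b [db [hb Ab]]]]]]; rewrite r_comp // in hb.
  exists (comp b a); rewrite d_comp // db da s_comp //.
  by rewrite comp_assoc.
move=> [c [dc [hc Ac]]].
have [b [a [hba [db [da Ec]]]]] := factorization_exists Pm Pn dc.
rewrite Ec s_comp // in hc.
by exists a; do 2 split => //; exists b; rewrite r_comp // -comp_assoc // -Ec.
Qed.

Lemma omega_star_PM A m n : path_space A -> P m -> P n ->
  omega_star_P (A, m * n) <-> omega_star_P (A, m) /\ omega_star_P (shift A m, n).
Proof.
move=> OA Pm Pn; have /path_spaceP [_ hA _] := OA.
rewrite /omega_star_P /= -shiftM //; split; last first.
  by move=> [[_ [_ _]] [_ [_ ne]]]; split; [|split; [exact: P_mul|]].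
move=> [_ [_ ne]]; have ne1 : shift A m !=set0.
  by case: ne => x [a [_ [_ h]]]; exists (comp a x).
by split; [|split; [exact: shift_path_space|]].
Qed.

Lemma partial_action : is_partial_action P r s comp d.
Proof.
split; first by move=> [A n] [OA [_ ne]]; exact: shift_path_space.
split.
  move=> A OA; rewrite /omega_star_P /= shift1 //.
  by split => //; split => //; split; [exact: P1 | case: OA].
split; first by move=> A m n OA Pm Pn; exact: omega_star_PM.
by move=> A m n _ Pm Pn _; rewrite shiftM.
Qed.

Local Notation dom_U := (Defs.dom_U P r s comp d).
Local Notation ran_V := (Defs.ran_V P r s comp d).

Lemma dom_UE n : P n ->
  dom_U n = [set A | path_space A /\ A `&` Lambda n !=set0].
Proof.
move=> Pn; apply/seteqP; split => A [OA]; have /path_spaceP [_ hA _] := OA.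
  by move=> [_ /(shift_neq0 _ hA) [mu Amu dmu]]; split => //; exists mu.
by move=> [mu [Amu dmu]]; split => //; split => //; apply/(shift_neq0 _ hA); exists mu.
Qed.

Lemma path_common_upper_bound A m n : path_space A ->
  A `&` Lambda m !=set0 -> A `&` Lambda n !=set0 -> exists k, P k /\ ple P m k /\ ple P n k.
Proof.
move=> /path_spaceP [_ _ dA] [mu [Amu <-]] [mu' [Amu' <-]].
have [nu [_ [munu mu'nu]]] := dA _ _ Amu Amu'.
by exists (d nu); split; [exact: P_deg | split; exact: path_le_deg].
Qed.

Lemma path_prefix_deg A m k : path_space A -> P m -> ple P m k ->
  A `&` Lambda k !=set0 -> A `&` Lambda m !=set0.
Proof.
move=> /path_spaceP [_ hA _] Pm mk [nu [Anu dnu]].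
have [e [enu de]] := prefix_exists Pm (eq_ind_r (ple P m) mk dnu).
by exists e; split => //; apply: hA Anu enu.
Qed.

Lemma dom_U_lub m n l : P m -> P n -> is_lub P m n l -> dom_U m `&` dom_U n = dom_U l.
Proof.
move=> Pm Pn [Pl [ml [nl lub]]]; rewrite !dom_UE //.
apply/seteqP; split => A; last first.
  by move=> [OA Al]; split; split => //; apply: path_prefix_deg Al.
move=> [[OA Am] [_ An]]; split => //.
have /path_spaceP [_ _ dA] := OA.
case: Am => mu [Amu dmu]; case: An => mu' [Amu' dmu'].
have [nu [Anu [munu mu'nu]]] := dA _ _ Amu Amu'.
apply: (path_prefix_deg OA Pl (k := d nu)); last by exists nu.
by apply: lub; [exact: P_deg | rewrite -dmu | rewrite -dmu']; exact: path_le_deg.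
Qed.

Lemma directed_act : directed_action P r s comp d.
Proof.
move=> m n Pm Pn [A [UmA UnA]].
have [l lubl] : exists l, is_lub P m n l.
  move: UmA UnA; rewrite !dom_UE // => -[OA Am] [_ An].
  exact (lub_exists HQ Pm Pn (path_common_upper_bound OA Am An)).
by case: (lubl) => Pl [ml [nl _]]; exists l; rewrite (dom_U_lub Pm Pn lubl).
Qed.

(** * The relative Fell topology *)

Local Notation omega_open := (Defs.omega_open r s comp).

Definition fell_set (K : set L) (I : finType) (U : I -> set L) : set (set L) :=
  [set F | F `&` K = set0 /\ forall i, F `&` U i !=set0].

(* Neighbourhoods of [A] in the relative Fell topology on [D]; arbitrary finite
   index types, rather than the ordinals of [omega_open], make them concatenable. *)
Definition fell_near (D : set (set L)) (A : set L) : set_system (set L) :=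
  [set G | exists K (I : finType) (U : I -> set L),
     [/\ compact K, forall i, open (U i), fell_set K U A &
         forall F, fell_set K U F -> path_space F -> D F -> G F]].

Lemma fell_set_cat K1 K2 (I1 I2 : finType) (U1 : I1 -> set L) (U2 : I2 -> set L) F :
  fell_set (K1 `|` K2) (sum_rect (fun=> set L) U1 U2) F <->
  fell_set K1 U1 F /\ fell_set K2 U2 F.
Proof.
rewrite /fell_set /= setIUr setU_eq0; split => [[[FK1 FK2] FU]|[[FK1 FU1] [FK2 FU2]]].
  by split; split => // i; [exact: (FU (inl i)) | exact: (FU (inr i))].
by split => // -[].
Qed.

Lemma fell_near_dom D A : fell_near D A (path_space `&` D).
Proof.
exists set0, void, (fun=> set0); split => //; first exact: compact0.
by split => [|[]]; rewrite setI0.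
Qed.

Global Instance fell_near_filter D A : Filter (fell_near D A).
Proof.
split.
- by have [K [I [U [? ? ? _]]]] := fell_near_dom D A; exists K, I, U.
- move=> G1 G2 [K1 [I1 [U1 [cK1 oU1 AKU1 G1U1]]]] [K2 [I2 [U2 [cK2 oU2 AKU2 G2U2]]]].
  exists (K1 `|` K2), (I1 + I2)%type, (sum_rect (fun=> set L) U1 U2).
  split; [exact: compactU | by case | exact/fell_set_cat |].
  by move=> F /fell_set_cat [FKU1 FKU2] OF DF; split; [exact: G1U1 | exact: G2U2].
- move=> G1 G2 G12 [K [I [U [cK oU AKU GU]]]].
  by exists K, I, U; split => // F FKU OF DF; apply/G12/GU.
Qed.

Lemma fell_near_self D A G : fell_near D A G -> path_space A -> D A -> G A.
Proof. by move=> [K [I [U [_ _ AKU GU]]]]; exact: GU. Qed.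

Lemma fell_near_meet D A U : open U -> A `&` U !=set0 ->
  fell_near D A [set F | F `&` U !=set0].
Proof.
move=> oU AU; exists set0, unit, (fun=> U).
by split => //; [exact: compact0 | split => //; rewrite setI0 | move=> F [_ /(_ tt)]].
Qed.

Lemma omega_open_near W A : omega_open W -> W A -> fell_near setT A W.
Proof.
move=> [_ WO] /WO [K [k [U [cK [oU [AKU GU]]]]]].
by exists K, 'I_k, U; split => // F FKU OF _; apply: GU.
Qed.

Lemma near_omega_open W : W `<=` path_space ->
  (forall A, W A -> fell_near setT A W) -> omega_open W.
Proof.
move=> WO Wnear; split => // A /Wnear [K [I [U [cK oU AKU GU]]]].
have enumE F : fell_set K U F <-> fell_basic K (fun i : 'I_#|I| => U (enum_val i)) F.
  by split => -[FK FU]; split => // i; rewrite -(enum_rankK i); exact: FU.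
exists K, #|I|, (fun i : 'I_#|I| => U (enum_val i)); split => //; split => //.
by split => [|F [/enumE FKU OF]]; [exact/enumE | exact: GU].
Qed.

Lemma omega_open_meet X : open X -> omega_open [set F | path_space F /\ F `&` X !=set0].
Proof.
move=> oX; apply: near_omega_open => [F []//|A [OA AX]].
by apply: filterS (filterI (fell_near_dom _ _) (fell_near_meet _ oX AX)) => F [[]].
Qed.

Lemma rel_cont_fell D (f : set L -> set L) :
  D `<=` path_space -> (forall A, D A -> path_space (f A)) ->
  (forall A K, D A -> compact K -> f A `&` K = set0 ->
     fell_near D A [set F | f F `&` K = set0]) ->
  (forall A U, D A -> open U -> f A `&` U !=set0 ->
     fell_near D A [set F | f F `&` U !=set0]) ->
  rel_cont omega_open omega_open D f.
Proof.
move=> DO fO miss hit O oO.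
exists [set F | path_space F /\ fell_near D F (f @^-1` O)]; split.
  apply: near_omega_open => [F []//|F [OF [K [I [U [cK oU FKU GU]]]]]].
  exists K, I, U; split => // F' F'KU OF' _; split => //.
  by exists K, I, U.
apply/seteqP; split => A [DA OfA]; split => //;
  last exact: fell_near_self OfA.2 OfA.1 DA.
split; first exact: DO.
have [K [I [U [cK oU [fAK fAU] GU]]]] := omega_open_near oO OfA.
have hits := filter_forall (fell_near_filter D A) (fun i => hit _ _ DA (oU i) (fAU i)).
apply: filterS (filterI (fell_near_dom _ _) (filterI (miss _ _ DA cK fAK) hits)).
by move=> F [[_ DF] [fFK fFU]]; apply: GU => //; exact: fO.
Qed.

(** * The shift as a partial local homeomorphism *)

Lemma composable_closed : closed (composable r s).
Proof. exact: closed_eq_comp hausdorffV continuous_s continuous_r. Qed.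

Lemma dom_U_open n : P n -> omega_open (dom_U n).
Proof. by move=> Pn; rewrite dom_UE //; apply/omega_open_meet/Lambda_open. Qed.

Definition cat_path (mu : L) (F : set L) : set L :=
  [set la | exists2 b, F b & s mu = r b /\ path_le la (comp mu b)].

Section CatPath.
Variables (mu : L) (F : set L) (b0 : L).
Hypotheses (OF : path_space F) (Fb0 : F b0) (mub0 : s mu = r b0).

Lemma cat_path_mem : cat_path mu F mu.
Proof. by exists b0 => //; split => //; exact: path_le_comp. Qed.

Lemma cat_path_space : path_space (cat_path mu F).
Proof.
have /path_spaceP [_ hF dF] := OF; apply/path_spaceP; split.
- by exists mu; exact: cat_path_mem.
- move=> la la' [b Fb [hb lab]] la'la.
  by exists b => //; split => //; apply: path_le_trans la'la lab.
- move=> la la' [b Fb [hb lab]] [b' Fb' [hb' la'b']].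
  have [c [Fc [bc b'c]]] := dF _ _ Fb Fb'.
  have hc : s mu = r c by rewrite hb (path_r_const hF dF Fb Fc).
  exists (comp mu c); split; first by exists c => //; split => //; exact: path_le_refl.
  by split; [apply: path_le_trans lab (path_le_compl hb bc)
            |apply: path_le_trans la'b' (path_le_compl hb' b'c)].
Qed.

Lemma shift_cat_path : shift (cat_path mu F) (d mu) = F.
Proof.
have /path_spaceP [_ hF dF] := OF; have /path_spaceP [_ hC dC] := cat_path_space.
rewrite (shiftE hC dC cat_path_mem); apply/seteqP; split => nu.
  move=> [hnu [b Fb [hb munub]]].
  by apply: hF Fb _; apply: path_le_compl_cancel munub.
move=> Fnu; have hnu : s mu = r nu by rewrite mub0 (path_r_const hF dF Fb0 Fnu).
by split => //; exists nu => //; split => //; exact: path_le_refl.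
Qed.

End CatPath.

Lemma cat_path_shift A mu : path_space A -> A mu -> cat_path mu (shift A (d mu)) = A.
Proof.
move=> /path_spaceP [_ hA dA] Amu; rewrite (shiftE hA dA Amu).
apply/seteqP; split => la; first by move=> [b [_ Ab] [_ lab]]; exact: hA Ab lab.
move=> Ala; have [nu [Anu [lanu [c [hc Enu]]]]] := dA _ _ Ala Amu.
by rewrite Enu in Anu lanu; exists c.
Qed.

Lemma ran_VE n : P n ->
  ran_V n = [set F | path_space F /\ F `&` r @^-1` (s @` Lambda n) !=set0].
Proof.
move=> Pn; apply/seteqP; split => F.
  move=> [A [OA [_ /= ne]] <-]; split; first exact: shift_path_space.
  have /path_spaceP [_ hA dA] := OA; have [mu Amu <-] := (shift_neq0 _ hA).1 ne.
  exists (iota (s mu)); rewrite (shiftE hA dA Amu) /= r_iota comp_iotar.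
  by split => //; exists mu.
move=> [OF [b [Fb [mu dmu mub]]]].
exists (cat_path mu F); last by rewrite -dmu (shift_cat_path OF Fb).
split; first exact: cat_path_space OF Fb _.
by split => //; rewrite -dmu (shift_cat_path OF Fb); case: OF.
Qed.

Lemma ran_V_open n : P n -> omega_open (ran_V n).
Proof.
move=> Pn; rewrite ran_VE //; apply: omega_open_meet.
apply: (continuousP _).1 continuous_r _ _.
exact: local_homeo_open local_homeo_s (Lambda_open n).
Qed.

Lemma shift_hit_near D A n U : open U -> shift A n `&` U !=set0 ->
  fell_near D A [set F | shift F n `&` U !=set0].
Proof.
move=> oU [b [[mu [dmu [hmu Amub]]] Ub]].
pose E := uncomp comp @` (composable r s `&` (Lambda n `*` U)).
have oE : open E.
  apply: open_map_comp; exists (Lambda n `*` U); split => //.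
  by apply: open_setX => //; exact: Lambda_open.
have AE : A `&` E !=set0 by exists (comp mu b); split => //; exists (mu, b).
apply: filterS (fell_near_meet _ oE AE) => F [x [Fx [[a c] [hac [da Uc]] ex]]].
by rewrite -ex in Fx; exists c; split => //; exists a.
Qed.

(* A compact neighbourhood [C] of [mu] bounds the degree-[n] prefixes that can occur
   in nearby paths, so [F . n] meets [K] only if [F] meets the compact set [CK]. *)
Lemma shift_miss_near D A n K mu : path_space A -> A mu -> d mu = n -> compact K ->
  shift A n `&` K = set0 -> fell_near D A [set F | shift F n `&` K = set0].
Proof.
move=> OA Amu dmu cK AnK; have /path_spaceP [_ hA dA] := OA.
have [C [cC [_ nC]]] :=
  compact_nbhs_sub hausdorffL locally_compactL openT (I : [set: L] mu).
have cCn : compact (C `&` Lambda n).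
  by apply: compact_closedI; [exact: cC | exact: Lambda_closed].
pose CK := uncomp comp @` (((C `&` Lambda n) `*` K) `&` composable r s).
have cCK : compact CK.
  apply: rel_cont_compact rel_cont_comp _ _; first exact: subIsetr.
  by apply: compact_closedI; [exact: compact_setX | exact: composable_closed].
have AC : A `&` (C° `&` Lambda n) !=set0 by exists mu; split => //; split.
have oC : open (C° `&` Lambda n).
  by apply: openI; [exact: open_interior | exact: Lambda_open].
have ACK : A `&` CK = set0.
  apply/seteqP; split => // x [Ax [[c k] [[[Cc dc] Kk] hck] ex]].
  rewrite -ex /= in Ax; have Ac : A c by apply: hA Ax (path_le_comp hck).
  have E : c = mu by apply: directed_deg_inj dA Ac Amu _; rewrite dc dmu.
  have : (shift A n `&` K) k by split => //; exists c.
  by rewrite AnK.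
have near_miss : fell_near D A [set F | F `&` CK = set0].
  exists CK, void, (fun=> set0).
  by split => // F [FCK _] _ _; exact: FCK.
apply: filterS (filterI (fell_near_dom _ _) (filterI near_miss (fell_near_meet _ oC AC))).
move=> F [[OF _] [FCK [x [Fx [Cx dx]]]]]; have /path_spaceP [_ hF dF] := OF.
apply/seteqP; split => // k [[a [da [ha Fak]]] Kk].
have Fa : F a by apply: hF Fak (path_le_comp ha).
have E : a = x by apply: directed_deg_inj dF Fa Fx _; rewrite da dx.
have : (F `&` CK) (comp a k).
  split => //; exists (a, k) => //; split => //; split => //; split => //.
  by rewrite E; apply: interior_subset.
by rewrite FCK.
Qed.

Lemma shift_rel_cont n : P n -> rel_cont omega_open omega_open (dom_U n) (shift^~ n).
Proof.
move=> Pn; apply: rel_cont_fell => [A []//|A [OA [_ ne]]|A K UA cK|A U _ oU].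
- exact: shift_path_space.
- have [OA [_ /= ne]] := UA; have /path_spaceP [_ hA _] := OA.
  have [mu Amu dmu] := (shift_neq0 _ hA).1 ne.
  exact: shift_miss_near OA Amu dmu cK.
- exact: shift_hit_near.
Qed.

Lemma compact_deg_cover K : compact K ->
  exists D : {fset L}, forall x, K x -> exists2 y, y \in D & d x = d y.
Proof.
move=> cK; have cov : K `<=` cover K (Lambda \o d) by move=> x Kx; exists x.
have [D _ KD] := compact_cover_compact cK (fun y _ => Lambda_open (d y)) cov.
by exists D => x /KD [y Dy dxy]; exists y.
Qed.

(* The unique factorisation [x = la nu] with [d la = q] is continuous in [x]. *)
Lemma closed_prefix_deg (K : set L) q p : closed K -> P q -> P p ->
  closed [set x | d x = q * p /\ exists2 la, K la & d la = q /\ path_le la x].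
Proof.
move=> cK Pq Pp; have [_ [g [gB [gK [_ gc]]]]] := homeo_comp Pq Pp.
suff -> : [set x | d x = q * p /\ exists2 la, K la & d la = q /\ path_le la x] =
          Lambda (q * p) `&` g @^-1` (K `*` [set: L]).
  by apply: rel_cont_closed => //; [exact: Lambda_closed | exact: closed_setXT].
apply/seteqP; split => x [dx h]; have [[hg [dg1 dg2]] gx] := gB x dx.
  split => //; case: h => la Kla [dla lax].
  have gxx : path_le (g x).1 x by exists (g x).2; split => //; rewrite -[in LHS]gx.
  by rewrite /= -(prefix_deg_inj lax gxx _) // dla dg1.
split => //; exists (g x).1; first by case: h.
by split => //; exists (g x).2; split => //; rewrite -[in LHS]gx.
Qed.

Section RdProper.
Hypothesis Hrd : rd_proper P r d.

Lemma rd_compact (K : set V) p : compact K -> P p -> compact [set c | K (r c) /\ d c = p].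
Proof.
move=> cK Pp; have := Hrd (K := K `*` [set p : discrete_topology Q]).
move=> /(_ _ (compact_setX cK (@compact_set1 _ (p : discrete_topology Q)))).
by apply => // -[x y] /= [_ ->].
Qed.

Section LocalInverse.
Variables (n : Q) (W : set L).
Hypotheses (Pn : P n) (oW : open W) (Wn : W `<=` Lambda n)
  (injW : {in W &, injective s}).

Definition inv_shift (F : set L) : set L := \bigcup_(mu in W) cat_path mu F.

Definition dom_W : set (set L) := [set A | path_space A /\ A `&` W !=set0].
Definition ran_W : set (set L) :=
  [set F | path_space F /\ F `&` r @^-1` (s @` W) !=set0].

Lemma inv_shiftE F mu b :
  path_space F -> W mu -> F b -> s mu = r b -> inv_shift F = cat_path mu F.
Proof.
move=> OF Wmu Fb mub; have /path_spaceP [_ hF dF] := OF.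
apply/seteqP; split => la; last by exists mu.
move=> [mu' Wmu' [b' Fb' [mub' lab']]].
suff -> : mu = mu' by exists b'.
by apply: injW; rewrite ?in_setE // mub mub' (path_r_const hF dF Fb Fb').
Qed.

Lemma inv_shift_ran F : ran_W F -> dom_W (inv_shift F) /\ shift (inv_shift F) n = F.
Proof.
move=> [OF [b [Fb [mu Wmu mub]]]]; have dmu : d mu = n := Wn Wmu.
rewrite (inv_shiftE OF Wmu Fb mub) -dmu (shift_cat_path OF Fb mub).
split => //; split; first exact: cat_path_space OF Fb mub.
by exists mu; split => //; exact: cat_path_mem Fb mub.
Qed.

Lemma dom_W_shift A : dom_W A -> ran_W (shift A n) /\ inv_shift (shift A n) = A.
Proof.
move=> [OA [mu [Amu Wmu]]]; have /path_spaceP [_ hA dA] := OA.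
have dmu : d mu = n := Wn Wmu.
have Amu0 : shift A n (iota (s mu)).
  by rewrite -dmu (shiftE hA dA Amu) /= r_iota comp_iotar.
have OS : path_space (shift A n) by apply: shift_path_space => //; exists (iota (s mu)).
split; last by rewrite (inv_shiftE OS Wmu Amu0 (esym (r_iota _))) -dmu cat_path_shift.
by split => //; exists (iota (s mu)); split => //; rewrite /= r_iota; exists mu.
Qed.

Lemma shift_dom_W : (shift^~ n) @` dom_W = ran_W.
Proof.
apply/seteqP; split => F; first by move=> [A /dom_W_shift [] ? _ <-].
by move=> /inv_shift_ran [? ?]; exists (inv_shift F).
Qed.

Lemma dom_W_sub : dom_W `<=` dom_U n.
Proof.
rewrite dom_UE // => A [OA [mu [Amu Wmu]]].
by split => //; exists mu; split; last exact: Wn.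
Qed.

Lemma ran_W_sub : ran_W `<=` ran_V n.
Proof.
rewrite ran_VE // => F [OF [b [Fb [mu Wmu mub]]]].
by split => //; exists b; split => //; exists mu => //; exact: Wn.
Qed.

Lemma ran_W_open : omega_open ran_W.
Proof.
apply: omega_open_meet; apply: (continuousP _).1 continuous_r _ _.
exact: local_homeo_open local_homeo_s oW.
Qed.

Definition lub_part (C K : set L) (q : Q) : set L :=
  [set c | exists mu la, [/\ C mu, s mu = r c, (K `&` Lambda q) la,
     path_le la (comp mu c) & is_lub P q n (d (comp mu c))]].

(* With [n p1 = q p2] the least upper bound of [q] and [n], the set [lub_part C K q]
   sits in the degree-[p1] part of [r^-1 (s C)], compact by [rd_proper]. *)
Lemma lub_part_compact C K q : compact C -> C `<=` Lambda n -> compact K -> P q ->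
  compact (lub_part C K q).
Proof.
move=> cC Cn cK Pq.
have [[p0 lub0] | nolub] := pselect (exists p, is_lub P q n p); last first.
  suff -> : lub_part C K q = set0 by exact: compact0.
  by rewrite -subset0 => c [mu [la [_ _ _ _ lub]]]; apply: nolub; eexists; exact: lub.
have [_ [[p2 [Pp2 E2]] [[p1 [Pp1 E1]] _]]] := lub0.
pose R := [set c | (s @` C) (r c) /\ d c = p1].
have cR : compact R.
  apply: rd_compact Pp1; apply: rel_cont_compact (subsetT _) cC.
  exact: rel_cont_of_continuous continuous_s.
pose Z := [set x | d x = q * p2 /\ exists2 la, K la & d la = q /\ path_le la x].
have clZ : closed Z by apply: closed_prefix_deg => //; exact: compact_closed hausdorffL cK.
pose S := (C `*` R) `&` (composable r s `&` uncomp comp @^-1` Z).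
have cS : compact S.
  apply: compact_closedI; first exact: compact_setX.
  exact: rel_cont_closed rel_cont_comp composable_closed clZ.
suff -> : lub_part C K q = snd @` S.
  apply: rel_cont_compact (subsetT _) cS; apply: rel_cont_of_continuous.
  by move=> [? ?]; exact: cvg_snd.
apply/seteqP; split => c.
  move=> [mu [la [Cmu hc [Kla dla] lac lub]]].
  have E := lub_uniq HQ lub lub0.
  have dc : d c = p1 by apply: (@mulgI _ n); rewrite -E1 -E d_comp // (Cn _ Cmu).
  exists (mu, c) => //; split; first by split => //; split => //; exists mu.
  by split => //; split; [rewrite /uncomp /= E | exists la].
move=> [[mu c'] [[Cmu _] [hc [Zx [la Kla [dla lac]]]]] <-] /=.
by rewrite /uncomp /= in Zx lac; exists mu, la; split => //; rewrite Zx -E2.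
Qed.

Lemma inv_shift_lub_part F' C K mu' b' la : path_space F' -> C `<=` W -> C mu' ->
  F' b' -> s mu' = r b' -> inv_shift F' la -> K la ->
  exists2 c, F' c & lub_part C K (d la) c.
Proof.
move=> OF' CW Cmu' F'b' hb' [mu2 Wmu2 [b2 F'b2 [hb2 lab2]]] Kla.
have /path_spaceP [_ hF' dF'] := OF'.
have E : mu2 = mu'.
  apply: injW; rewrite ?in_setE; [exact: Wmu2 | exact: CW |].
  by rewrite hb2 hb' (path_r_const hF' dF' F'b2 F'b').
rewrite {}E in hb2 lab2.
have [c [cb2 [hc [lac lub]]]] := prefix_lub hb2 lab2.
exists c; first exact: hF' F'b2 cb2.
exists mu', la; split => //; rewrite (Wn (CW _ Cmu')) in lub; exact: lub.
Qed.

Lemma inv_shift_miss_near F K : ran_W F -> compact K -> inv_shift F `&` K = set0 ->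
  fell_near ran_W F [set F' | inv_shift F' `&` K = set0].
Proof.
move=> [OF [b0 [Fb0 [mu Wmu mub0]]]] cK FK.
have [C [cC [CW nC]]] := compact_nbhs_sub hausdorffL locally_compactL oW Wmu.
have [D KD] := compact_deg_cover cK.
pose Kall := \bigcup_(y in [set` D]) lub_part C K (d y).
have cKall : compact Kall.
  rewrite /Kall bigcup_fset; apply: bigsetU_compact => y _.
  by apply: lub_part_compact => //; [exact: (subset_trans CW) | exact: P_deg].
have oC : open (r @^-1` (s @` C°)).
  apply: (continuousP _).1 continuous_r _ _.
  by apply: local_homeo_open local_homeo_s _; exact: open_interior.
have near_miss : fell_near ran_W F [set F' | F' `&` Kall = set0].
  exists Kall, void, (fun=> set0); split => //; last by move=> F' [F'K _].
  split => //; apply/seteqP; split => // c [Fc [y _ [mu' [la [Cmu' hc [Kla _] lac _]]]]].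
  have : (inv_shift F `&` K) la by split => //; exists mu'; [exact: CW | exists c].
  by rewrite FK.
have FC : F `&` r @^-1` (s @` C°) !=set0 by exists b0; split => //; exists mu.
apply: filterS (filterI (fell_near_dom _ _) (filterI near_miss (fell_near_meet _ oC FC))).
move=> F' [[OF' _] [F'K [b' [F'b' [mu' Cmu' hb']]]]].
apply/seteqP; split => // la [F'la Kla].
have [y Dy dla] := KD _ Kla.
have [c F'c lubc] := inv_shift_lub_part OF' CW (interior_subset Cmu') F'b' hb' F'la Kla.
have : (F' `&` Kall) c by split => //; exists y => //; rewrite -dla.
by rewrite F'K.
Qed.

(* If [la <= mu b] with [la] in [U], then [mu' b'] has a prefix in [U] for all
   composable [(mu', b')] near [(mu, b)], since composition is continuous and open. *)
Lemma inv_shift_hit_near F U : open U -> inv_shift F `&` U !=set0 ->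
  fell_near ran_W F [set F' | inv_shift F' `&` U !=set0].
Proof.
move=> oU [la [[mu Wmu [b Fb [hb [al [hal Eal]]]]] Ula]].
pose E := uncomp comp @` (composable r s `&` (U `*` [set: L])).
have oE : open E.
  apply: open_map_comp; exists (U `*` [set: L]); split => //.
  by apply: open_setX => //; exact: openT.
have [OE [oOE EOE]] := rel_cont_comp oE.
have OEmb : OE (mu, b).
  have : (composable r s `&` uncomp comp @^-1` E) (mu, b).
    by split => //; exists (la, al) => //; rewrite /uncomp /= Eal.
  by rewrite EOE => -[].
have [[X Y] [/= nX nY] XYO] := open_nbhs_nbhs (conj oOE OEmb).
pose Y' := Y° `&` r @^-1` (s @` (X° `&` W)).
have oY' : open Y'.
  apply: openI; first exact: open_interior.
  apply: (continuousP _).1 continuous_r _ _; apply: local_homeo_open local_homeo_s _.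
  by apply: openI => //; exact: open_interior.
have FY' : F `&` Y' !=set0 by exists b; split => //; split => //; exists mu.
apply: filterS (fell_near_meet _ oY' FY') => F' [b' [F'b' [Yb' [mu' [Xmu' Wmu'] hb']]]].
have : (composable r s `&` uncomp comp @^-1` E) (mu', b').
  by rewrite EOE; split => //; apply: XYO; split; apply: interior_subset.
move=> [_ [[la' al'] [hla' [Ula' _]] ex]].
by exists la'; split => //; exists mu' => //; exists b' => //; split => //; exists al'.
Qed.

Lemma inv_shift_rel_cont : rel_cont omega_open omega_open ran_W inv_shift.
Proof.
apply: rel_cont_fell => [F []//|F /inv_shift_ran [[]]//|F K WF|F U _].
- exact: inv_shift_miss_near WF.
- exact: inv_shift_hit_near.
Qed.

Lemma shift_homeo_W : homeo_on omega_open omega_open dom_W ran_W (shift^~ n).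
Proof.
split; first by move=> A /dom_W_shift [].
exists inv_shift; split; first by move=> F /inv_shift_ran [].
split; first by move=> A /dom_W_shift [].
split; last exact: inv_shift_rel_cont.
exact: rel_cont_subset (shift_rel_cont Pn) dom_W_sub.
Qed.

End LocalInverse.

Lemma partial_local_homeos : by_partial_local_homeos P r s comp d.
Proof.
move=> n Pn; split; first exact: dom_U_open.
split; first exact: ran_V_open.
split; first by move=> A UA; exists A.
move=> A UA; have [mu [Amu dmu]] : A `&` Lambda n !=set0.
  by move: UA; rewrite dom_UE // => -[].
have [W0 [oW0 [W0mu injW0]]] := local_homeo_locally_inj mu local_homeo_s.
pose W := W0 `&` Lambda n.
have oW : open W by apply: openI => //; exact: Lambda_open.
have injW : {in W &, injective s}.
  by apply: sub_in2 injW0 => x; rewrite !in_setE => -[].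
have Wn : W `<=` Lambda n by exact: subIsetr.
have WU := dom_W_sub Pn Wn.
exists (dom_W W); rewrite (shift_dom_W Wn injW).
split; first by split; [case: UA | exists mu].
split; first exact: WU.
split; first by apply: rel_open_sub WU; exact: omega_open_meet.
split; last exact: shift_homeo_W.
exact: rel_open_sub (ran_W_open oW) (ran_W_sub Pn Wn).
Qed.

End RdProper.
End PGraph.

Theorem theorem6p10 (Q : groupType) (P : set Q) (L V : topologicalType)
  (iota : V -> L) (r s : L -> V) (comp : L -> L -> L) (d : L -> Q) :
  quasi_lattice_ordered P ->
  is_topological_P_graph P iota r s comp d ->
  rd_proper P r d ->
  is_partial_action P r s comp d /\
  by_partial_local_homeos P r s comp d /\
  directed_action P r s comp d.
Proof.
move=> HQ HG Hrd; split; first exact: partial_action HG.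
split; first exact: partial_local_homeos HQ HG Hrd.
exact: directed_act HQ HG.
Qed.
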